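(* Let $\sigma_{0}^{2}>0$, $C_{\mathrm{P}}>0$ and $\epsilon\in(0,1]$ be such that $H(\epsilon):=2\log\big(\tfrac{2}{C_{\mathrm{P}}\epsilon^{2}}\big)>0$. For $\bar{n},\bar{\sigma}>0$ let \[ G(\bar{n};\bar{\sigma}):=\frac{2}{C_{\mathrm{P}}}\exp\Big\{-\frac{1}{2\bar{\sigma}^{2}}\mathsf{W}^{2}\Big(\frac{C_{\mathrm{P}}\bar{n}\bar{\sigma}^{2}}{2\exp(\bar{\sigma}^{2}/2)}\Big)\Big\},\qquad\mathsf{B}(\bar{n},\bar{\sigma}):=\bar{n}\bar{N},\quad\bar{N}:=\sigma_{0}^{2}/\bar{\sigma}^{2}, \] where $\mathsf{W}$ is the Lambert W function on $[0,\infty)$ (inverse of $x\mapsto xe^{x}$) and $\mathsf{W}^{2}$ its square. Then the function $\mathsf{B}$ on $\mathbb{R}_{+}^{2}$, restricted to the constraint set $\{(\bar{n},\bar{\sigma}):G(\bar{n};\bar{\sigma})=\epsilon^{2}\}$, is minimized when \[ \bar{\sigma}=\bar{\sigma}_{\star}(\epsilon):=\frac{\sqrt{H(\epsilon)+12}-\sqrt{H(\epsilon)}}{2}, \] and $\lim_{H(\epsilon)\to\infty}\sqrt{H(\epsilon)}\,\bar{\sigma}_{\star}(\epsilon)=3$. Moreover, if $H(\epsilon)\ge1$, then taking $\bar{\sigma}(\epsilon)=3/\sqrt{H(\epsilon)}$ and $\bar{n}(\epsilon)$ such that $G(\bar{n}(\epsilon);\bar{\sigma}(\epsilon))=\epsilon^{2}$,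 one has \[ \bar{N}(\epsilon)=\frac{2}{9}\sigma_{0}^{2}\log\Big(\tfrac{2}{C_{\mathrm{P}}\epsilon^{2}}\Big),\quad\bar{n}(\epsilon)\le\frac{4\exp(15/2)}{3C_{\mathrm{P}}}\log\Big(\tfrac{2}{C_{\mathrm{P}}\epsilon^{2}}\Big),\quad\mathsf{B}(\epsilon)\le\frac{8\sigma_{0}^{2}\exp(15/2)}{27C_{\mathrm{P}}}\log\Big(\tfrac{2}{C_{\mathrm{P}}\epsilon^{2}}\Big)^{2}, \] where $\mathsf{B}(\epsilon):=\mathsf{B}(\bar{n}(\epsilon),\bar{\sigma}(\epsilon))$.
   Context: Interpretation (not needed for the statement): $G(n;\sigma)$ is an upper bound on the convergence rate $\|\tilde{P}^{n}f\|_{2}^{2}/\|f\|_{\mathrm{osc}}^{2}$ of a pseudo-marginal chain with lognormal weights $\log W\sim N(-\sigma^{2}/2,\sigma^{2})$ whose marginal chain has a strong Poincaré constant $C_{\mathrm{P}}$, with $\sigma^{2}=\sigma_{0}^{2}/N$ where $N$ is the number of particles. *)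

From Stdlib Require Import Reals ClassicalEpsilon.
From Coquelicot Require Import Coquelicot.
Open Scope R_scope.

Definition LambertW (y : R) : R :=
  epsilon (inhabits 0) (fun x => 0 <= x /\ x * exp x = y).

Definition G (CP n s : R) : R :=
  2 / CP * exp (- (1 / (2 * s ^ 2)) * (LambertW (CP * n * s ^ 2 / (2 * exp (s ^ 2 / 2)))) ^ 2).

Definition Nbar (sigma0_sq s : R) : R := sigma0_sq / s ^ 2.
Definition B (sigma0_sq n s : R) : R := n * Nbar sigma0_sq s.

Definition H (CP eps : R) : R := 2 * ln (2 / (CP * eps ^ 2)).

Definition sigma_star_of_H (h : R) : R := (sqrt (h + 12) - sqrt h) / 2.
Definition sigma_star (CP eps : R) : R := sigma_star_of_H (H CP eps).

(* On the constraint set {G = eps^2} write a := sqrt H.  Since W is the inverse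
   of x |-> x e^x, G(n; s) = eps^2 forces W(...) = a s, which pins n down to
   n(s) = 2 a exp(s^2/2 + a s) / (C_P s).  Hence B(n(s), s) is a positive
   multiple of exp(s^2/2 + a s - 3 ln s), a strictly convex function of s whose
   critical point solves s^2 + a s = 3, i.e. s = sigma_star.  The same relation
   gives sqrt H * sigma_star = 3 - sigma_star^2 and sigma_star^2 < 9 / H, hence
   the limit.  At s = 3 / a everything is explicit and H >= 1 bounds the
   exponent 9 / (2 H) + 3 by 15 / 2. *)

From Stdlib Require Import Reals Lra Psatz ClassicalEpsilon.
From Coquelicot Require Import Coquelicot.
Open Scope R_scope.

Lemma exp_le_compat x y : x <= y -> exp x <= exp y.
Proof.
  intros Hxy; destruct (Rle_lt_or_eq_dec _ _ Hxy) as [Hlt | ->].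
  - now apply Rlt_le, exp_increasing.
  - apply Rle_refl.
Qed.

Lemma ln_le_sub_1 x : 0 < x -> ln x <= x - 1.
Proof.
  intros Hx; pose proof (exp_ineq1_le (ln x)) as H1.
  rewrite exp_ln in H1 by exact Hx; lra.
Qed.

Lemma xexp_lt x y : 0 <= x -> x < y -> x * exp x < y * exp y.
Proof.
  intros Hx Hxy.
  assert (exp x < exp y) by now apply exp_increasing.
  pose proof (exp_pos x); nra.
Qed.

Lemma LambertW_spec y :
  0 <= y -> 0 <= LambertW y /\ LambertW y * exp (LambertW y) = y.
Proof.
  intros Hy; unfold LambertW; apply epsilon_spec.
  destruct (Req_dec y 0) as [-> | Hy0].
  { exists 0; split; [lra | ring]. }
  assert (Hcont : continuity (fun x => x * exp x - y)).
  { apply continuity_minus.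
    - apply continuity_mult; apply derivable_continuous.
      + apply derivable_id.
      + apply derivable_exp.
    - intros x; apply continuity_const; now intros ? ?. }
  assert (1 + y <= exp y) by apply exp_ineq1_le.
  pose proof (exp_pos 0); pose proof (exp_pos y).
  destruct (IVT _ 0 y Hcont) as [x [Hx Hxy]]; [lra | cbn; lra | cbn; nra |].
  exists x; split; lra.
Qed.

Lemma LambertW_eq_iff y x :
  0 <= y -> 0 <= x -> LambertW y = x <-> y = x * exp x.
Proof.
  intros Hy Hx; destruct (LambertW_spec y Hy) as [HW HWy].
  split.
  - intros <-; now symmetry.
  - intros ->.
    destruct (Rtotal_order (LambertW (x * exp x)) x) as [Hlt | [Heq | Hgt]].
    + pose proof (xexp_lt _ _ HW Hlt); lra.
    + exact Heq.
    + pose proof (xexp_lt _ _ Hx Hgt); lra.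
Qed.

Lemma G_eq_iff_LambertW CP a n s : 0 < CP -> 0 <= a -> 0 <= n -> 0 < s ->
  G CP n s = 2 / CP * exp (- (a ^ 2 / 2)) <->
  LambertW (CP * n * s ^ 2 / (2 * exp (s ^ 2 / 2))) = a * s.
Proof.
  intros HCP Ha Hn Hs; unfold G.
  set (w := LambertW _).
  assert (Hw : 0 <= w).
  { apply LambertW_spec, Rmult_le_pos; [| apply Rlt_le, Rinv_0_lt_compat].
    - apply Rmult_le_pos; [nra | apply pow_le; lra].
    - pose proof (exp_pos (s ^ 2 / 2)); lra. }
  assert (Hs2 : 0 < s ^ 2) by (apply pow_lt; exact Hs).
  split.
  - intros HG.
    assert (Hexp : - (1 / (2 * s ^ 2)) * w ^ 2 = - (a ^ 2 / 2)).
    { apply exp_inv, (Rmult_eq_reg_l (2 / CP)); [exact HG |].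
      apply Rgt_not_eq, Rdiv_lt_0_compat; lra. }
    assert (Hsq : w ^ 2 = (a * s) ^ 2).
    { apply (Rmult_eq_reg_l (- (1 / (2 * s ^ 2)))).
      - rewrite Hexp; field; lra.
      - apply Ropp_neq_0_compat, Rgt_not_eq, Rdiv_lt_0_compat; lra. }
    apply Rsqr_inj; [exact Hw | nra | unfold Rsqr; nra].
  - intros ->; do 2 f_equal; field; lra.
Qed.

(* The unique n with G(n; s) = (2 / C_P) exp (- a^2 / 2). *)
Definition level_n (CP a s : R) : R := 2 * a * exp (s ^ 2 / 2 + a * s) / (CP * s).

Lemma level_n_pos CP a s : 0 < CP -> 0 < a -> 0 < s -> 0 < level_n CP a s.
Proof.
  intros HCP Ha Hs; unfold level_n.
  pose proof (exp_pos (s ^ 2 / 2 + a * s)).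
  apply Rdiv_lt_0_compat; nra.
Qed.

Lemma G_eq_level_iff CP a n s : 0 < CP -> 0 <= a -> 0 < n -> 0 < s ->
  G CP n s = 2 / CP * exp (- (a ^ 2 / 2)) <-> n = level_n CP a s.
Proof.
  intros HCP Ha Hn Hs.
  pose proof (exp_pos (s ^ 2 / 2)).
  assert (Hscale : 0 < CP * s ^ 2 / (2 * exp (s ^ 2 / 2))).
  { apply Rdiv_lt_0_compat; [apply Rmult_lt_0_compat, pow_lt |]; lra. }
  rewrite G_eq_iff_LambertW, LambertW_eq_iff by nra.
  unfold level_n; rewrite exp_plus.
  split; intros Heq.
  - apply (Rmult_eq_reg_l (CP * s ^ 2 / (2 * exp (s ^ 2 / 2)))); [| lra].
    replace (_ * n) with (CP * n * s ^ 2 / (2 * exp (s ^ 2 / 2))) by (field; lra).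
    rewrite Heq; field; lra.
  - rewrite Heq; field; lra.
Qed.

Lemma eps_sq_eq_exp_H CP eps : 0 < CP -> 0 < eps ->
  eps ^ 2 = 2 / CP * exp (- (H CP eps / 2)).
Proof.
  intros HCP Heps; unfold H.
  assert (Heps2 : 0 < eps ^ 2) by (apply pow_lt; exact Heps).
  replace (2 * ln (2 / (CP * eps ^ 2)) / 2) with (ln (2 / (CP * eps ^ 2))) by field.
  rewrite exp_Ropp, exp_ln by (apply Rdiv_lt_0_compat; nra).
  field; lra.
Qed.

Lemma G_eq_eps_sq_iff CP eps n s : 0 < CP -> 0 < eps -> 0 <= H CP eps -> 0 < n -> 0 < s ->
  G CP n s = eps ^ 2 <-> n = level_n CP (sqrt (H CP eps)) s.
Proof.
  intros HCP Heps HH Hn Hs.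
  rewrite <- G_eq_level_iff, pow2_sqrt, <- eps_sq_eq_exp_H by (try apply sqrt_pos; lra).
  reflexivity.
Qed.

Lemma B_level_n sigma0_sq CP a s : 0 < CP -> 0 < s ->
  B sigma0_sq (level_n CP a s) s
  = 2 * a * sigma0_sq / CP * exp (s ^ 2 / 2 + a * s - 3 * ln s).
Proof.
  intros HCP Hs; unfold B, Nbar, level_n.
  replace (3 * ln s) with (ln (s ^ 3)) by (rewrite ln_pow by exact Hs; simpl; ring).
  unfold Rminus; rewrite (exp_plus _ (- _)), exp_Ropp, exp_ln by (apply pow_lt; exact Hs).
  field; lra.
Qed.

(* Tangent-line bound on [3 ln]: 3 ln (s / s0) <= 3 (s / s0 - 1) = (s0 + a) s - 3;
   what remains is (s - s0)^2 / 2 >= 0. *)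
Lemma log_cost_min a s0 s : 0 < s0 -> 0 < s -> s0 ^ 2 + a * s0 = 3 ->
  s0 ^ 2 / 2 + a * s0 - 3 * ln s0 <= s ^ 2 / 2 + a * s - 3 * ln s.
Proof.
  intros Hs0 Hs Hcrit.
  assert (Hln : ln s - ln s0 <= s / s0 - 1).
  { rewrite <- ln_div by assumption; apply ln_le_sub_1, Rdiv_lt_0_compat; assumption. }
  assert (Hratio : 3 * (s / s0) = (s0 + a) * s) by (rewrite <- Hcrit; field; lra).
  pose proof (pow2_ge_0 (s - s0)); nra.
Qed.

Lemma B_level_n_min sigma0_sq CP a s0 s :
  0 < sigma0_sq -> 0 < CP -> 0 <= a -> 0 < s0 -> 0 < s -> s0 ^ 2 + a * s0 = 3 ->
  B sigma0_sq (level_n CP a s0) s0 <= B sigma0_sq (level_n CP a s) s.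
Proof.
  intros Hsig HCP Ha Hs0 Hs Hcrit.
  rewrite !B_level_n by assumption.
  apply Rmult_le_compat_l.
  - apply Rdiv_le_0_compat; nra.
  - now apply exp_le_compat, log_cost_min.
Qed.

Lemma sigma_star_of_H_pos h : 0 <= h -> 0 < sigma_star_of_H h.
Proof.
  intros Hh; unfold sigma_star_of_H.
  enough (sqrt h < sqrt (h + 12)) by lra.
  apply sqrt_lt_1; lra.
Qed.

Lemma sigma_star_of_H_crit h :
  0 <= h -> sigma_star_of_H h ^ 2 + sqrt h * sigma_star_of_H h = 3.
Proof.
  intros Hh; unfold sigma_star_of_H.
  pose proof (sqrt_sqrt h Hh); pose proof (sqrt_sqrt (h + 12) ltac:(lra)).
  nra.
Qed.

Lemma is_lim_sqrt_mul_sigma_star_of_H :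
  is_lim (fun h => sqrt h * sigma_star_of_H h) p_infty 3.
Proof.
  apply is_lim_spec; intros e; simpl.
  pose proof (cond_pos e) as He.
  exists (Rmax 1 (9 / e)); intros h Hh.
  assert (Hh1 : 1 < h) by (eapply Rle_lt_trans; [apply Rmax_l | exact Hh]).
  assert (Hhe : 9 < e * h).
  { assert (H9 : 9 / e < h) by (eapply Rle_lt_trans; [apply Rmax_r | exact Hh]).
    apply (Rmult_lt_compat_l e) in H9; [| exact He].
    replace (e * (9 / e)) with 9 in H9 by (field; lra); exact H9. }
  pose proof (sigma_star_of_H_pos h ltac:(lra)) as Hs.
  pose proof (sigma_star_of_H_crit h ltac:(lra)) as Hcrit.
  set (s := sigma_star_of_H h) in *.
  pose proof (sqrt_sqrt h ltac:(lra)) as Hr2.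
  assert (Hr : 0 < sqrt h) by (apply sqrt_lt_R0; lra).
  set (r := sqrt h) in *.
  replace (r * s - 3) with (- s ^ 2) by lra.
  rewrite Rabs_Ropp, Rabs_pos_eq by (apply pow_le; lra).
  assert (Hrs : 0 < r * s < 3) by nra.
  assert (Hhs : h * s ^ 2 < 9).
  { replace (h * s ^ 2) with ((r * s) * (r * s)) by (rewrite <- Hr2; ring); nra. }
  apply (Rmult_lt_reg_l h); nra.
Qed.

Lemma level_n_three_div CP a : 0 < CP -> 0 < a ->
  level_n CP a (3 / a) = 2 * a ^ 2 * exp (9 / (2 * a ^ 2) + 3) / (3 * CP).
Proof.
  intros HCP Ha; unfold level_n.
  replace ((3 / a) ^ 2 / 2 + a * (3 / a)) with (9 / (2 * a ^ 2) + 3) by (field; lra).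
  field; lra.
Qed.

Lemma level_n_three_div_le CP a : 0 < CP -> 0 < a -> 1 <= a ^ 2 ->
  level_n CP a (3 / a) <= 2 * a ^ 2 * exp (15 / 2) / (3 * CP).
Proof.
  intros HCP Ha Ha2.
  rewrite level_n_three_div by assumption.
  unfold Rdiv at 1 3; apply Rmult_le_compat_r; [apply Rlt_le, Rinv_0_lt_compat; lra |].
  apply Rmult_le_compat_l; [nra |].
  apply exp_le_compat.
  assert (Hinv : / a ^ 2 <= 1) by (rewrite <- Rinv_1; apply Rinv_le_contravar; lra).
  replace (9 / (2 * a ^ 2)) with (9 / 2 * / a ^ 2) by (field; lra).
  lra.
Qed.

Theorem proposition57 (sigma0_sq CP eps : R)
  (hs0 : 0 < sigma0_sq) (hCP : 0 < CP) (heps : 0 < eps <= 1)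
  (hH : 0 < H CP eps) :
  (* B restricted to {G = eps^2} is minimized at sigma = sigma_star(eps) *)
  (exists nstar : R, 0 < nstar /\ G CP nstar (sigma_star CP eps) = eps ^ 2 /\
     forall n s : R, 0 < n -> 0 < s -> G CP n s = eps ^ 2 ->
       B sigma0_sq nstar (sigma_star CP eps) <= B sigma0_sq n s)
  /\
  (* lim_{H -> oo} sqrt(H) * sigma_star = 3 *)
  is_lim (fun h => sqrt h * sigma_star_of_H h) p_infty 3
  /\
  (1 <= H CP eps ->
    let sb := 3 / sqrt (H CP eps) in
    (exists n : R, 0 < n /\ G CP n sb = eps ^ 2) /\
    forall n : R, 0 < n -> G CP n sb = eps ^ 2 ->
      Nbar sigma0_sq sb = 2 / 9 * sigma0_sq * ln (2 / (CP * eps ^ 2)) /\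
      n <= 4 * exp (15 / 2) / (3 * CP) * ln (2 / (CP * eps ^ 2)) /\
      B sigma0_sq n sb <= 8 * sigma0_sq * exp (15 / 2) / (27 * CP)
                           * (ln (2 / (CP * eps ^ 2))) ^ 2).
Proof.
  destruct heps as [heps _].
  assert (hlevel : forall n s, 0 < n -> 0 < s ->
            G CP n s = eps ^ 2 <-> n = level_n CP (sqrt (H CP eps)) s)
    by (intros; apply G_eq_eps_sq_iff; lra).
  assert (ha : 0 < sqrt (H CP eps)) by (apply sqrt_lt_R0; exact hH).
  assert (ha2 : sqrt (H CP eps) ^ 2 = H CP eps) by (apply pow2_sqrt; lra).
  assert (hL : ln (2 / (CP * eps ^ 2)) = H CP eps / 2) by (unfold H; field).
  set (a := sqrt (H CP eps)) in *.
  split; [| split; [exact is_lim_sqrt_mul_sigma_star_of_H |]].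
  - pose proof (sigma_star_of_H_pos _ (Rlt_le _ _ hH)) as hs.
    pose proof (sigma_star_of_H_crit _ (Rlt_le _ _ hH)) as hcrit.
    exists (level_n CP a (sigma_star CP eps)).
    split; [now apply level_n_pos |].
    split; [now apply hlevel; [apply level_n_pos | |] |].
    intros n s hn hs' hG; apply hlevel in hG; [subst n | assumption..].
    apply B_level_n_min; auto; lra.
  - intros h1 sb.
    assert (hsb : 0 < sb) by (apply Rdiv_lt_0_compat; lra).
    split.
    + exists (level_n CP a sb); split; [now apply level_n_pos |].
      now apply hlevel; [apply level_n_pos | |].
    + intros n hn hG; apply hlevel in hG; [subst n | assumption..].
      pose proof (level_n_three_div_le CP a hCP ha ltac:(lra)) as hbound.
      assert (hN : Nbar sigma0_sq sb = 2 / 9 * sigma0_sq * ln (2 / (CP * eps ^ 2))).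
      { unfold Nbar, sb; rewrite hL, <- ha2; field; lra. }
      split; [exact hN | unfold B; rewrite hN, hL, <- ha2; split].
      * replace (4 * exp (15 / 2) / (3 * CP) * (a ^ 2 / 2))
          with (2 * a ^ 2 * exp (15 / 2) / (3 * CP)) by (field; lra).
        exact hbound.
      * replace (8 * sigma0_sq * exp (15 / 2) / (27 * CP) * (a ^ 2 / 2) ^ 2)
          with (2 * a ^ 2 * exp (15 / 2) / (3 * CP) * (2 / 9 * sigma0_sq * (a ^ 2 / 2)))
          by (field; lra).
        apply Rmult_le_compat_r; [nra | exact hbound].
Qed.
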